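(* Let $G$ be a finite $2$-group with $G\not\cong C_2$, and $\omega\in H^3(G,\mathbb{C}^\times)$, and suppose $\mathcal{Z}:=\mathcal{Z}(\mathrm{Vec}_G^\omega)$ has set of twists exactly $\{1,i,-i\}$. Then for every invertible object $X$ of $\mathcal{Z}$, $X\otimes X\cong\mathbbm{1}$ if and only if $\theta_X=1$.
   Context: $\mathcal{Z}(\mathrm{Vec}_G^\omega)$ is the Drinfeld center (twisted double) of the category of $G$-graded vector spaces with associator twisted by the 3-cocycle $\omega$; it is a modular fusion category and $\theta_X$ denotes the twist of a simple object $X$. An object is invertible if $X\otimes X^*\cong\mathbbm{1}$. *)

From HB Require Import structures.
From mathcomp Require Import all_boot all_order all_algebra all_fingroup all_solvable all_field.
Set Implicit Arguments. Unset Strict Implicit. Unset Printing Implicit Defensive.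
Import Order.TTheory GRing.Theory Num.Theory.
Local Open Scope ring_scope.

(* Explicit model of the Drinfeld center Z(Vec_G^omega) as the category of
   modules over the twisted quantum double D^omega(G) (Dijkgraaf-Pasquier-Roche). *)

Section Model.
Variable gT : finGroupType.

Definition normalized_3cocycle (G : {group gT}) (w : gT -> gT -> gT -> algC) : Prop :=
  [/\ (forall a b c, a \in G -> b \in G -> c \in G -> w a b c != 0%R),
      (forall a b c d, a \in G -> b \in G -> c \in G -> d \in G ->
         (w b c d * w a (b * c)%g d * w a b c = w (a * b)%g c d * w a b (c * d)%g)%R) &
      (forall a b, a \in G -> b \in G ->
         [/\ w 1%g a b = 1%R, w a 1%g b = 1%R & w a b 1%g = 1%R])].

(* DPR 2-cocycle theta_a(x,y) governing the algebra D^omega(G):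
   (delta_a x)(delta_{a} y) = theta_a(x,y) delta_a (xy)  for x,y in C_G(a). *)
Definition dpr_theta (w : gT -> gT -> gT -> algC) (a x y : gT) : algC :=
  (w a x y * w x y (a ^ (x * y))%g / w x (a ^ x)%g y)%R.

(* DPR coproduct factor gamma_x(h,k):
   Delta(delta_g x) = sum_{hk=g} gamma_x(h,k) delta_h x (x) delta_k x. *)
Definition dpr_gamma (w : gT -> gT -> gT -> algC) (x h k : gT) : algC :=
  (w h k x * w x (h ^ x)%g (k ^ x)%g / w h x (k ^ x)%g)%R.

Definition proj_rep (H : {set gT}) (beta : gT -> gT -> algC) (n : nat)
    (rho : gT -> 'M[algC]_n) : Prop :=
  (forall x, x \in H -> rho x \in unitmx) /\
  (forall x y, x \in H -> y \in H -> (rho x *m rho y = beta x y *: rho (x * y)%g)%R).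

Definition mx_irred (H : {set gT}) (n : nat) (rho : gT -> 'M[algC]_n) : Prop :=
  forall U : 'M[algC]_n, (forall x, x \in H -> stablemx U (rho x)) ->
    (U == 0 :> 'M[algC]_n)%R || row_full U.

(* t is the twist of some simple object (a, rho) of Z(Vec_G^omega): a in G,
   rho an irreducible theta_a-projective representation of C_G(a); the twist
   acts on it as the scalar rho(a). *)
Definition center_twist (G : {group gT}) (w : gT -> gT -> gT -> algC) (t : algC) : Prop :=
  exists (a : gT) (n : nat) (rho : gT -> 'M[algC]_n.+1),
    [/\ a \in G, proj_rep ('C_G[a])%g (dpr_theta w a) rho, mx_irred ('C_G[a])%g rho
      & rho a = (t%:M)%R].

(* Invertible (i.e. one-dimensional) simple objects: a central, chi a
   theta_a-projective character of G. *)
Definition inv_obj (G : {group gT}) (w : gT -> gT -> gT -> algC)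
    (X : gT * (gT -> algC)) : Prop :=
  [/\ X.1 \in ('Z(G))%g,
      (forall x, x \in G -> X.2 x != 0%R) &
      (forall x y, x \in G -> y \in G ->
         (X.2 x * X.2 y = dpr_theta w X.1 x y * X.2 (x * y)%g)%R)].

(* tensor product of invertible objects (via the DPR coproduct) *)
Definition inv_tensor (w : gT -> gT -> gT -> algC) (X Y : gT * (gT -> algC))
  : gT * (gT -> algC) :=
  ((X.1 * Y.1)%g, fun x => (dpr_gamma w x X.1 Y.1 * X.2 x * Y.2 x)%R).

Definition inv_unit : gT * (gT -> algC) := (1%g, fun _ => 1%R).

Definition inv_iso (G : {group gT}) (X Y : gT * (gT -> algC)) : Prop :=
  X.1 = Y.1 /\ (forall x, x \in G -> X.2 x = Y.2 x).

Definition inv_twist (X : gT * (gT -> algC)) : algC := X.2 X.1.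

End Model.

From mathcomp Require Import all_boot all_order all_algebra all_fingroup all_solvable all_field.
From mathcomp Require Import ring.
From Stdlib Require Import Classical Wf_nat.
Set Implicit Arguments.
Unset Strict Implicit.
Unset Printing Implicit Defensive.
Import Order.TTheory GRing.Theory Num.Theory.
Local Open Scope ring_scope.

(* In the
   [theta_b]-twisted regular representation of [C_G(b)] the operator of [b] is
   central and has every [#[b]]-th root of [c_b = prod_j theta_b(b^j, b)] as an
   eigenvalue; a minimal invariant subspace of such an eigenspace is simple, so all
   these roots are twists.  As [-1] is not a twist, [G] has no element of order 4,
   hence exponent 2, and [omega(b,b,b) = -1] for every involution [b].
   An invertible object is [(a, chi)] with [a] central and [chi(x)^2 = theta_a(x,x)].
   Its twist [chi(a)] squares to [omega(a,a,a)], so it is 1 only for [a = 1]; and if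
   [X (x) X] is trivial with [a != 1], then for any [x] outside [{1, a}] (this is
   where [|G| != 2] enters) a cocycle identity yields
   [omega(a,a,a) omega(x,x,x) = omega(ax,ax,ax)], i.e. [1 = -1]. *)

Lemma conjg_commute (gT : finGroupType) (x y : gT) : commute x y -> (x ^ y)%g = x.
Proof. by move/commgP/conjg_fixP. Qed.

Lemma N1_neq1 (R : numDomainType) : -1 != 1 :> R.
Proof. by rewrite lt_eqF // (lt_trans (ltrN10 R) ltr01). Qed.

Lemma classical_ex_minn (P : nat -> Prop) :
  (exists n, P n) -> exists2 n, P n & forall k, P k -> (n <= k)%N.
Proof.
move=> exP.
have [n [[Pn minP] _]] :=
  dec_inh_nat_subset_has_unique_least_element P (fun n => classic (P n)) exP.
by exists n => // k /minP /ssrnat.leP.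
Qed.

Section Cocycle.
Variables (gT : finGroupType) (G : {group gT}) (w : gT -> gT -> gT -> algC).
Hypothesis w_cocycle : normalized_3cocycle G w.

Lemma cocycle_neq0 a b c : a \in G -> b \in G -> c \in G -> w a b c != 0.
Proof. by case: w_cocycle => nz _ _; apply: nz. Qed.

Lemma cocycle_eq a b c d : a \in G -> b \in G -> c \in G -> d \in G ->
  w b c d * w a (b * c)%g d * w a b c = w (a * b)%g c d * w a b (c * d)%g.
Proof. by case: w_cocycle => _ eq _; apply: eq. Qed.

Lemma cocycle1l a b : a \in G -> b \in G -> w 1%g a b = 1.
Proof. by case: w_cocycle => _ _ norm aG bG; case: (norm a b aG bG). Qed.

Lemma cocycle1m a b : a \in G -> b \in G -> w a 1%g b = 1.
Proof. by case: w_cocycle => _ _ norm aG bG; case: (norm a b aG bG). Qed.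

Lemma cocycle1r a b : a \in G -> b \in G -> w a b 1%g = 1.
Proof. by case: w_cocycle => _ _ norm aG bG; case: (norm a b aG bG). Qed.

Lemma dpr_theta_neq0 a x y : a \in G -> x \in G -> y \in G -> dpr_theta w a x y != 0.
Proof.
move=> aG xG yG; rewrite /dpr_theta !mulf_eq0 invr_eq0 !negb_or.
by rewrite !cocycle_neq0 ?groupJ ?groupM.
Qed.

Lemma dpr_theta1x a y : a \in G -> y \in G -> dpr_theta w a 1%g y = 1.
Proof.
move=> aG yG; rewrite /dpr_theta mul1g conjg1.
by rewrite cocycle1m ?cocycle1l ?groupJ // mulr1 divr1.
Qed.

Lemma dpr_theta_x1 a x : a \in G -> x \in G -> dpr_theta w a x 1%g = 1.
Proof.
move=> aG xG; rewrite /dpr_theta mulg1.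
by rewrite cocycle1r ?cocycle1m ?cocycle1r ?groupJ // mulr1 divr1.
Qed.

Lemma dpr_theta1 x y : x \in G -> y \in G -> dpr_theta w 1%g x y = 1.
Proof.
by move=> xG yG; rewrite /dpr_theta !conj1g cocycle1l ?cocycle1r ?cocycle1m // mulr1 divr1.
Qed.

Lemma dpr_gamma11 x : x \in G -> dpr_gamma w x 1%g 1%g = 1.
Proof.
move=> xG; rewrite /dpr_gamma !conj1g.
by rewrite cocycle1l ?cocycle1r ?cocycle1m ?group1 // mulr1 divr1.
Qed.

Lemma dpr_theta_involution a : a \in G -> (a * a = 1)%g -> dpr_theta w a a a = w a a a.
Proof.
move=> aG aa; rewrite /dpr_theta aa conjg1 conjg_commute //.
by field; rewrite cocycle_neq0.
Qed.

(* In both identities below, each bracketed factor of the right-hand side is the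
   ratio of the two sides of an instance of the cocycle identity. *)
Lemma dpr_theta_cocycle b g x y : b \in G -> g \in G -> x \in G -> y \in G ->
  commute b g -> commute b x -> commute b y ->
  dpr_theta w b g x * dpr_theta w b (g * x)%g y =
  dpr_theta w b g (x * y)%g * dpr_theta w b x y.
Proof.
move=> bG gG xG yG cbg cbx cby.
rewrite /dpr_theta !conjg_commute ?mulgA; try by do 2?apply: commuteM.
have E1 := cocycle_eq bG gG xG yG; rewrite cbg in E1.
have E2 := cocycle_eq gG bG xG yG.
have E3 := cocycle_eq gG xG bG yG; rewrite -cbx in E3.
have E4 := cocycle_eq gG xG yG bG; rewrite -cby in E4.
set L := (_ * _)%R; set R := (_ * _)%R.
have -> : L = R *
   ((w g x y * w b (g * x)%g y * w b g x) / (w (g * b)%g x y * w b g (x * y)%g)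
  * ((w (g * b)%g x y * w g b (x * y)%g) / (w b x y * w g (b * x)%g y * w g b x))
  * ((w x b y * w g (b * x)%g y * w g x b) / (w (g * x)%g b y * w g x (b * y)%g))
  * ((w (g * x)%g y b * w g x (b * y)%g) / (w x y b * w g (x * y)%g b * w g x y))).
  by rewrite /L /R; field; rewrite !cocycle_neq0 ?groupM.
by rewrite E1 E2 E3 E4 !divff ?mulr1 // ?mulf_neq0 ?cocycle_neq0 ?groupM.
Qed.

Lemma dpr_gamma_theta_involutions a x : a \in G -> x \in G -> commute a x ->
  (a * a = 1)%g -> (x * x = 1)%g ->
  dpr_gamma w x a a * dpr_theta w a x x * w a a a * w x x x =
  w (a * x)%g (a * x)%g (a * x)%g.
Proof.
move=> aG xG cax aa xx; set y := (a * x)%g.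
have yG : y \in G by rewrite groupM.
have xy : (x * y = a)%g by rewrite /y mulgA -cax -mulgA xx mulg1.
have yy : (y * y = 1)%g by rewrite {1}/y -mulgA xy aa.
rewrite /dpr_gamma /dpr_theta conjg_commute // xx conjg1.
have E1 := cocycle_eq aG aG aG xG.
have E2 := cocycle_eq aG xG xG xG.
have E3 := cocycle_eq aG xG xG yG.
have E4 := cocycle_eq aG xG yG yG.
have E5 := cocycle_eq xG aG xG xG.
have E6 := cocycle_eq xG aG xG yG.
have E7 := cocycle_eq xG xG aG xG.
rewrite -/y ?aa ?xx -?cax -/y ?xy ?yy ?cocycle1l ?cocycle1m ?cocycle1r ?mulr1 ?mul1r //
  in E1 E2 E3 E4 E5 E6 E7.
set L := (_ * w x x x)%R.
have -> : L = w y y y *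
  ((w a a x * w a a a / w a a y)
  * (w x x x * w a x x / w y x x)
  * (w x x y * w a x x / (w y x y * w a x a))
  * (w x y y * w a a y * w a x y / w y y y)
  * (w y x x / (w a x x * w x y x * w x a x))
  * (w y x y * w x a a / (w a x y * w x y y * w x a x))
  * (w x a x * w x y x * w x x a / w x x y)).
  by rewrite /L; field; rewrite !cocycle_neq0.
by rewrite E1 E2 E3 E4 E5 E6 E7 !divff ?mulr1 // ?mulf_neq0 ?cocycle_neq0.
Qed.

End Cocycle.

Section EigenvalueTwist.
Variables (gT : finGroupType) (G : {group gT}) (w : gT -> gT -> gT -> algC).
Variables (b : gT) (n : nat) (rho : gT -> 'M[algC]_n) (lam : algC).
Local Notation C := ('C_G[b])%g.
Hypothesis bG : b \in G.
Hypothesis rho_proj : proj_rep C (dpr_theta w b) rho.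
Hypothesis rho_commb : forall x, x \in C -> rho x *m rho b = rho b *m rho x.

Definition eigenmodule {m} (U : 'M[algC]_(m, n)) : Prop :=
  [/\ forall x, x \in C -> stablemx U (rho x), U *m rho b = lam *: U & U != 0].

Lemma eigenmodule_eqmx m1 m2 (U : 'M_(m1, n)) (V : 'M_(m2, n)) :
  (U :=: V)%MS -> eigenmodule U -> eigenmodule V.
Proof.
move=> eqUV [stU eigU nzU]; split.
- by move=> x xC; rewrite -(eqmx_stable _ eqUV) stU.
- have /submxP[D ->] : (V <= U)%MS by rewrite eqUV.
  by rewrite -mulmxA eigU scalemxAr.
- by rewrite -mxrank_eq0 -eqUV mxrank_eq0.
Qed.

Lemma minimal_eigenmodule_twist k (B : 'M_(k, n)) :
  row_free B -> eigenmodule B ->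
  (forall m (V : 'M_(m, n)), eigenmodule V -> (k <= \rank V)%N) ->
  center_twist G w lam.
Proof.
case: k B => [|k] B freeB [stB eigB nzB] minB; first by rewrite flatmx0 eqxx in nzB.
have [rho_unit rhoM] := rho_proj.
pose sigma x := B *m rho x *m pinvmx B.
have sigmaB x : x \in C -> sigma x *m B = B *m rho x.
  by move=> xC; rewrite mulmxKpV ?stB.
exists b, k, sigma; split=> //.
- split=> [x xC | x y xC yC].
    rewrite -row_free_unit /row_free -(mxrankMfree _ freeB) sigmaB //.
    by rewrite mxrankMfree ?row_free_unit ?rho_unit.
  apply: (row_free_inj freeB).
  rewrite -mulmxA sigmaB // mulmxA sigmaB // -mulmxA rhoM //.
  by rewrite -scalemxAl sigmaB ?groupM // scalemxAr.
- move=> W stW; case: eqP => //= /eqP nzW.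
  have eigWB : eigenmodule (W *m B).
    split.
    + by move=> x xC; rewrite -mulmxA -sigmaB // mulmxA submxMr ?stW.
    + by rewrite -mulmxA eigB scalemxAr.
    + by rewrite -mxrank_eq0 mxrankMfree // mxrank_eq0.
  by rewrite /row_full eqn_leq rank_leq_col -(mxrankMfree _ freeB) minB.
- by rewrite /sigma eigB -scalemxAl mulmxVp // scalemx1.
Qed.

Lemma eigenvalue_twist (v : 'rV_n) :
  v != 0 -> v *m rho b = lam *: v -> center_twist G w lam.
Proof.
move=> nzv eigv.
pose E := kermx (rho b - lam%:M).
have eigE : eigenmodule E.
  have EbE : E *m rho b = lam *: E.
    by apply/eqP; rewrite -subr_eq0 -mul_mx_scalar -mulmxBr; apply/eqP/mulmx_ker.
  split=> //.
  - move=> x xC; apply/sub_kermxP.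
    by rewrite mulmxBr -mulmxA rho_commb // mulmxA EbE mul_mx_scalar -scalemxAl subrr.
  - have vE : (v <= E)%MS by apply/sub_kermxP; rewrite mulmxBr eigv mul_mx_scalar subrr.
    by apply: contraNneq nzv => E0; rewrite -submx0 -E0.
pose rank_of_eigenmodule r := exists m (V : 'M_(m, n)), eigenmodule V /\ \rank V = r.
have [_ [m [V [eigV <-]]] minV] : exists2 r, rank_of_eigenmodule r &
    forall k, rank_of_eigenmodule k -> (r <= k)%N.
  by apply: classical_ex_minn; exists (\rank E), n, E.
apply: (@minimal_eigenmodule_twist _ (row_base V) (row_base_free V)).
  exact: eigenmodule_eqmx (eqmx_sym (eq_row_base V)) eigV.
by move=> m' V' eigV'; apply: minV; exists m', V'.
Qed.

End EigenvalueTwist.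

Section TwistedRegular.
Variables (gT : finGroupType) (G : {group gT}) (w : gT -> gT -> gT -> algC).
Hypothesis w_cocycle : normalized_3cocycle G w.
Variable b : gT.
Hypothesis bG : b \in G.
Local Notation C := ('C_G[b])%g.
Local Notation theta := (dpr_theta w b).

Let C1 : 1%g \in C := group1 _.
Let elt (i : 'I_#|C|) : gT := enum_val i.
Let idx (y : gT) : 'I_#|C| := enum_rank_in C1 y.

Let eltC i : elt i \in C. Proof. exact: enum_valP. Qed.
Let eltK y : y \in C -> elt (idx y) = y. Proof. exact: enum_rankK_in. Qed.
Let idxK i : idx (elt i) = i. Proof. exact: enum_valK_in. Qed.
Let CG x : x \in C -> x \in G. Proof. by case/subcent1P. Qed.
Let Cb x : x \in C -> commute b x. Proof. by case/subcent1P. Qed.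
Let bC : b \in C. Proof. exact: subcent1_id. Qed.

(* Right multiplication by [x] in the [theta]-twisted group algebra of [C], in the
   basis [C] enumerated by [elt]. *)
Definition twisted_regular (x : gT) : 'M[algC]_#|C| :=
  \matrix_(i, j) (if (elt i * x)%g == elt j then theta (elt i) x else 0).

Lemma twisted_regularM x y : x \in C -> y \in C ->
  twisted_regular x *m twisted_regular y = theta x y *: twisted_regular (x * y)%g.
Proof.
move=> xC yC; apply/matrixP => i j; rewrite !mxE.
have ixC : (elt i * x)%g \in C by rewrite groupM.
rewrite (bigD1 (idx (elt i * x)%g)) //= big1 ?addr0 => [|k nk]; last first.
  rewrite !mxE; case: eqP => [ik | _]; last by rewrite mul0r.
  by rewrite ik idxK eqxx in nk.
rewrite !mxE eltK // eqxx mulgA; case: eqP => _; last by rewrite !mulr0.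
by rewrite [RHS]mulrC (dpr_theta_cocycle w_cocycle) ?CG //; apply: Cb.
Qed.

Lemma twisted_regular1 : twisted_regular 1%g = 1%:M.
Proof.
apply/matrixP => i j; rewrite !mxE mulg1 (inj_eq enum_val_inj).
by case: eqP => // _; rewrite (dpr_theta_x1 w_cocycle) ?CG.
Qed.

Lemma twisted_regular_proj : proj_rep C theta twisted_regular.
Proof.
split=> [x xC | x y xC yC]; last exact: twisted_regularM.
have xVC : (x^-1)%g \in C by rewrite groupV.
have nz_theta : theta x x^-1 != 0 by rewrite (dpr_theta_neq0 w_cocycle) ?CG.
suff /mulmx1_unit[] :
  twisted_regular x *m ((theta x x^-1)^-1 *: twisted_regular x^-1) = 1%:M by [].
by rewrite -scalemxAr twisted_regularM // mulgV twisted_regular1 scalerA mulVf ?scale1r.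
Qed.

Lemma twisted_regular_commb x : x \in C ->
  twisted_regular x *m twisted_regular b = twisted_regular b *m twisted_regular x.
Proof.
move=> xC; have cbx := Cb xC.
rewrite !twisted_regularM // cbx; congr (_ *: _).
have cbb := commute_refl b.
rewrite /dpr_theta !conjg_commute //; try exact: commuteM.
by field; rewrite !(cocycle_neq0 w_cocycle) ?CG ?bC.
Qed.

Section Root.
Variable lam : algC.
Local Notation m := #[b]%g.
Hypothesis lam_root : lam ^+ m = \prod_(j < m) theta (b ^+ j)%g b.

Let lam_neq0 : lam != 0.
Proof.
have : lam ^+ m != 0.
  by rewrite lam_root; apply/prodf_neq0 => j _; rewrite (dpr_theta_neq0 w_cocycle) ?groupX.
by apply: contraNneq => ->; rewrite expr0n eqn0Ngt order_gt0.
Qed.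

Let mu (k : nat) : algC := (\prod_(j < k) theta (b ^+ j)%g b) / lam ^+ k.
Let f (h : gT) : algC := \sum_(k < m | h == (b ^+ k)%g) mu k.

Let f_expg k : (k < m)%N -> f (b ^+ k)%g = mu k.
Proof.
move=> ltkm; rewrite /f (big_pred1 (Ordinal ltkm)) // => j /=.
by rewrite [RHS]eq_sym; exact: (eq_expg_ord (Ordinal ltkm) j (leqnn m)).
Qed.

Let f_out h : h \notin <[b]>%g -> f h = 0.
Proof.
by move=> hb; rewrite /f big_pred0 // => k; apply: contraNF hb => /eqP ->; apply: mem_cycle.
Qed.

(* [\row_j f (elt j)] is a [lam]-eigenvector of [twisted_regular b]; the wrap-around
   [b ^+ m = 1] is where [lam_root] is needed. *)
Let f_shift h : f h * theta h b = lam * f (h * b)%g.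
Proof.
have [hb | hb] := boolP (h \in <[b]>%g); last first.
  have hbb : (h * b)%g \notin <[b]>%g by rewrite groupMr ?cycle_id.
  by rewrite !f_out ?mul0r ?mulr0.
case/cyclePmin: hb => k ltkm ->; rewrite f_expg // -expgSr.
have [ltk1m | lemk1] := ltnP k.+1 m.
  rewrite f_expg // /mu big_ord_recr /= exprSr.
  by field; rewrite lam_neq0 expf_eq0 (negbTE lam_neq0) andbF.
have em : m = k.+1 by apply/eqP; rewrite eqn_leq ltkm lemk1.
rewrite -em expg_order -(expg0 b) f_expg ?order_gt0 // /mu big_ord0 expr0 divr1 mulr1.
move: lam_root; rewrite em big_ord_recr exprS /= => root_eq.
by rewrite mulrAC -root_eq mulfK ?expf_neq0.
Qed.

Lemma center_twist_root : center_twist G w lam.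
Proof.
pose v := \row_(j < #|C|) f (elt j).
apply: (eigenvalue_twist bG twisted_regular_proj twisted_regular_commb (v := v)).
  apply/eqP => /rowP /(_ (idx 1%g)); rewrite !mxE eltK // -(expg0 b).
  by rewrite f_expg ?order_gt0 // /mu big_ord0 expr0 divr1 => /eqP; rewrite oner_eq0.
apply/rowP => j; rewrite !mxE.
have jC : (elt j * b^-1)%g \in C by rewrite groupM ?groupV.
rewrite (bigD1 (idx (elt j * b^-1)%g)) //= big1 ?addr0 => [|i ni]; last first.
  rewrite !mxE; case: eqP => [ij | _]; last by rewrite mulr0.
  by rewrite -ij mulgK idxK eqxx in ni.
by rewrite !mxE eltK // mulgKV eqxx f_shift mulgKV.
Qed.

End Root.
End TwistedRegular.

Lemma inv_obj_chi1 (gT : finGroupType) (G : {group gT}) (w : gT -> gT -> gT -> algC)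
    (X : gT * (gT -> algC)) :
  normalized_3cocycle G w -> inv_obj G w X -> X.2 1%g = 1.
Proof.
move=> w_cocycle [aZ chi_neq0 chiM]; have /centerP[aG _] := aZ.
apply: (mulfI (chi_neq0 _ (group1 G))).
by rewrite chiM ?group1 // (dpr_theta_x1 w_cocycle) ?group1 // mulg1 mul1r mulr1.
Qed.

Lemma exists_outside_pair (gT : finGroupType) (G : {group gT}) (a : gT) :
  a \in G -> a != 1%g -> #|G| != 2%N -> exists2 x, x \in G & x \notin [set 1%g; a].
Proof.
move=> aG a_nt G_neq2; apply/exists_inP; rewrite -negb_forall_in.
have card1a : #|[set 1%g; a]| = 2%N by rewrite cards2 eq_sym a_nt.
apply: contra G_neq2 => /forall_inP sub1a; rewrite -card1a eqn_leq.
rewrite !subset_leq_card // ?subUset ?sub1set ?group1 ?aG //.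
exact/subsetP.
Qed.

Section TwistsOneIMinusI.
Variables (gT : finGroupType) (G : {group gT}) (w : gT -> gT -> gT -> algC).
Hypothesis w_cocycle : normalized_3cocycle G w.
Hypothesis twists : forall t : algC, center_twist G w t <-> t \in [:: 1; 'i; - 'i].

Lemma not_center_twistN1 : ~ center_twist G w (-1).
Proof.
move/twists; rewrite !inE (negbTE (N1_neq1 _)) /=.
case/orP => /eqP i_eq; move: (N1_neq1 algC); rewrite -sqrCi.
  by rewrite -i_eq sqrrN expr1n eqxx.
by rewrite -sqrrN -i_eq sqrrN expr1n eqxx.
Qed.

Lemma center_twist_expr4 t : center_twist G w t -> t ^+ 4 = 1.
Proof.
move/twists; rewrite !inE => /or3P[] /eqP ->; first exact: expr1n.
  by rewrite (exprM _ 2 2) sqrCi sqrrN expr1n.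
by rewrite (exprM _ 2 2) sqrrN sqrCi sqrrN expr1n.
Qed.

(* If [#[b] = 4], every 4th root of [c] is a twist, hence a 4th root of unity; so
   [c = 1] and [-1] is a twist. *)
Lemma order_neq4 b : b \in G -> #[b]%g != 4%N.
Proof.
move=> bG; apply/eqP => ob4.
pose c := \prod_(j < #[b]%g) dpr_theta w b (b ^+ j)%g b.
have root4_twist lam : lam ^+ 4 = c -> center_twist G w lam.
  by rewrite -[in lam ^+ 4]ob4; apply: center_twist_root.
have /center_twist_expr4 : center_twist G w (4.-root c).
  by apply: root4_twist; rewrite rootCK.
rewrite rootCK // => c1.
by apply/not_center_twistN1/root4_twist; rewrite c1 (exprM _ 2 2) sqrrN !expr1n.
Qed.

(* For an involution [b], [c = w b b b] squares to 1 by the cocycle identity, and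
   [c = 1] would make the square root [-1] of [c] a twist. *)
Lemma cocycle_involution b : b \in G -> b != 1%g -> (b * b = 1)%g -> w b b b = -1.
Proof.
move=> bG b_nt bb.
have ob2 : #[b]%g = 2%N by apply: nt_prime_order.
have c_eq : \prod_(j < #[b]%g) dpr_theta w b (b ^+ j)%g b = w b b b.
  rewrite ob2 !big_ord_recr big_ord0 /= mul1r expg1.
  by rewrite (dpr_theta1x w_cocycle) // (dpr_theta_involution w_cocycle) // mul1r.
have : w b b b ^+ 2 == 1.
  rewrite expr2; have := cocycle_eq w_cocycle bG bG bG bG.
  rewrite bb (cocycle1m w_cocycle) ?(cocycle1l w_cocycle) ?(cocycle1r w_cocycle) //.
  by rewrite mulr1 mul1r => ->.
rewrite sqrf_eq1 => /orP[/eqP c1 | /eqP //]; case: not_center_twistN1.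
by apply: (center_twist_root w_cocycle bG); rewrite c_eq c1 ob2 sqrrN expr1n.
Qed.

Hypothesis pG : pgroup 2 G.

Lemma mulgg_eq1 b : b \in G -> (b * b = 1)%g.
Proof.
move=> bG; have [k oG] := p_natP pG.
have /(dvdn_pfactor _ _ (isT : prime 2))[j _ ob] : (#[b]%g %| 2 ^ k)%N.
  by rewrite -oG order_dvdG.
case: j ob => [|[|j]] ob; try by apply/eqP; rewrite -expg2 -order_dvdn ob.
case/eqP: (order_neq4 (groupX (2 ^ j) bG)).
by rewrite orderXdiv ob ?dvdn_exp2l ?leqW // -(addn2 j) expnD mulKn ?expn_gt0.
Qed.

Hypothesis G_neq2 : #|G| != 2%N.
Variable X : gT * (gT -> algC).
Hypothesis X_inv : inv_obj G w X.

Lemma inv_obj_chi_sqr x : x \in G -> X.2 x * X.2 x = dpr_theta w X.1 x x.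
Proof.
case: X_inv => _ _ chiM xG.
by rewrite chiM // mulgg_eq1 // (inv_obj_chi1 w_cocycle X_inv) mulr1.
Qed.

Lemma inv_tensor_square_unitP : inv_iso G (inv_tensor w X X) (inv_unit gT) <-> X.1 = 1%g.
Proof.
have /centerP[aG cGa] : X.1 \in 'Z(G)%g by case: X_inv.
rewrite /inv_iso /=; split => [[_ sq_chi] | a1]; last first.
  split=> [|x xG]; first by rewrite a1 mulg1.
  rewrite -mulrA inv_obj_chi_sqr // a1.
  by rewrite (dpr_gamma11 w_cocycle) // (dpr_theta1 w_cocycle) ?mulr1.
apply/eqP; apply: contraT => a_nt.
have [x xG] := exists_outside_pair aG a_nt G_neq2.
rewrite !inE negb_or => /andP[x_nt x_neq_a].
have ax_nt : (X.1 * x)%g != 1%g.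
  apply: contraNneq x_neq_a => ax1.
  by rewrite -[x]mul1g -(mulgg_eq1 aG) -mulgA ax1 mulg1.
have := dpr_gamma_theta_involutions w_cocycle aG xG (cGa x xG)
  (mulgg_eq1 aG) (mulgg_eq1 xG).
rewrite -inv_obj_chi_sqr // mulrA sq_chi //.
rewrite !cocycle_involution ?groupM ?mulgg_eq1 ?groupM // mul1r mulrNN mulr1 => /eqP.
by rewrite eq_sym (negbTE (N1_neq1 _)).
Qed.

Lemma inv_twist_eq1P : inv_twist X = 1 <-> X.1 = 1%g.
Proof.
have /centerP[aG _] : X.1 \in 'Z(G)%g by case: X_inv.
rewrite /inv_twist; split => [chia1 | ->]; last exact: inv_obj_chi1 w_cocycle X_inv.
apply/eqP; apply: contraT => a_nt.
have := cocycle_involution aG a_nt (mulgg_eq1 aG).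
rewrite -(dpr_theta_involution w_cocycle aG (mulgg_eq1 aG)) -inv_obj_chi_sqr // chia1 mulr1.
by move/eqP; rewrite eq_sym (negbTE (N1_neq1 _)).
Qed.

End TwistsOneIMinusI.

Theorem lemma5p13 (gT : finGroupType) (G : {group gT})
    (w : gT -> gT -> gT -> algC) :
  (pgroup 2 G) -> #|G| != 2%N -> normalized_3cocycle G w ->
  (forall t : algC, center_twist G w t <-> t \in [:: 1; 'i; - 'i]) ->
  forall X : gT * (gT -> algC), inv_obj G w X ->
    (inv_iso G (inv_tensor w X X) (inv_unit gT) <-> inv_twist X = 1).
Proof.
move=> pG G_neq2 w_cocycle twists X X_inv.
exact: iff_trans (inv_tensor_square_unitP w_cocycle twists pG G_neq2 X_inv)
                 (iff_sym (inv_twist_eq1P w_cocycle twists pG X_inv)).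
Qed.
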